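(* Let $P$ be a generic set of $n$ points in convex position in the plane. If each point of $P$ is colored red or blue independently and uniformly at random, giving $P=R\cup B$, then $\mathbb{E}[\operatorname{cr}(R,B)]\ge n/4-1$.
   Context: A finite planar point set is generic if no three of its points are collinear and every subset has a unique Euclidean minimum spanning tree (MST). For a generic set $X$, $T_X$ denotes its MST, drawn with straight-line edges. For disjoint $R,B$ with $R\cup B$ generic, $\operatorname{cr}(R,B)$ is the number of crossings between the edges of $T_R$ and the edges of $T_B$. *)

From mathcomp Require Import all_boot all_order all_algebra.
From mathcomp Require Import boolp reals.
Set Implicit Arguments. Unset Strict Implicit. Unset Printing Implicit Defensive.
Import Order.TTheory GRing.Theory Num.Theory.
Local Open Scope ring_scope.

Section Defs.
Variable R : realType.
Variable n : nat.
Variable p : 'I_n -> R * R.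

Definition dist (a b : R * R) : R :=
  Num.sqrt ((a.1 - b.1) ^+ 2 + (a.2 - b.2) ^+ 2).

Definition collinear (a b c : R * R) : bool :=
  (b.1 - a.1) * (c.2 - a.2) - (b.2 - a.2) * (c.1 - a.1) == 0.

(* Edges are pairs (i, j) of point indices with i < j. *)
Definition edge_rel (E : {set 'I_n * 'I_n}) : rel 'I_n :=
  fun x y => ((x, y) \in E) || ((y, x) \in E).

Definition is_spanning_tree (S : {set 'I_n}) (E : {set 'I_n * 'I_n}) : Prop :=
  [/\ forall e, e \in E -> [/\ e.1 \in S, e.2 \in S & (e.1 < e.2)%N],
      forall x y, x \in S -> y \in S -> connect (edge_rel E) x y &
      forall e, e \in E -> ~~ connect (edge_rel (E :\ e)) e.1 e.2].

Definition weight (E : {set 'I_n * 'I_n}) : R :=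
  \sum_(e in E) dist (p e.1) (p e.2).

Definition is_mst (S : {set 'I_n}) (E : {set 'I_n * 'I_n}) : Prop :=
  is_spanning_tree S E /\
  forall E', is_spanning_tree S E' -> weight E <= weight E'.

Definition generic : Prop :=
  (forall i j k : 'I_n, i != j -> j != k -> i != k ->
     ~~ collinear (p i) (p j) (p k)) /\
  (forall (S : {set 'I_n}) E1 E2, is_mst S E1 -> is_mst S E2 -> E1 = E2).

Definition convex_position : Prop :=
  forall i : 'I_n, ~ exists lam : 'I_n -> R,
    [/\ forall j, 0 <= lam j, lam i = 0, \sum_j lam j = 1 &
        p i = (\sum_j lam j * (p j).1, \sum_j lam j * (p j).2)].

Definition seg_meet (a b c d : R * R) : Prop :=
  exists s t : R, [/\ 0 <= s <= 1, 0 <= t <= 1,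
    (1 - s) * a.1 + s * b.1 = (1 - t) * c.1 + t * d.1 &
    (1 - s) * a.2 + s * b.2 = (1 - t) * c.2 + t * d.2].

Definition cr (E1 E2 : {set 'I_n * 'I_n}) : nat :=
  #|[set ef : ('I_n * 'I_n) * ('I_n * 'I_n) |
      [&& ef.1 \in E1, ef.2 \in E2 &
          `[< seg_meet (p ef.1.1) (p ef.1.2) (p ef.2.1) (p ef.2.2) >]]]|.

End Defs.

From mathcomp Require Import all_boot all_order all_algebra.
From mathcomp Require Import boolp reals.
From mathcomp Require Import ring lra zify.
Import Order.TTheory GRing.Theory Num.Theory.
Set Implicit Arguments. Unset Strict Implicit. Unset Printing Implicit Defensive.

(* Label the points 0, ..., n-1 counterclockwise around the convex polygon and
   call a point a run start if it is red and its predecessor is blue.  Each point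
   is a run start with probability 1/4, so a colouring has n/4 run starts on
   average.  Given a run start z0, relabel cyclically so that z0 gets label 0; its
   blue predecessor then has the last label.  The red tree needs at least
   (#run starts - 1) edges xy joining distinct red runs.  For such an edge, the
   predecessor of a run start between x and y is a blue point strictly inside the
   arc from x to y, while the predecessor of z0 is a blue point outside it, so the
   blue tree has an edge with exactly one end inside the arc; in convex position
   that edge crosses xy.  Hence cr(R, B) >= #run starts - 1. *)


Section Orientation.
Variable R : realType.
Local Open Scope ring_scope.
Implicit Types a b c d o x y z : R * R.

Definition orient a b c : R :=
  (b.1 - a.1) * (c.2 - a.2) - (b.2 - a.2) * (c.1 - a.1).

Lemma collinearE a b c : collinear a b c = (orient a b c == 0).
Proof. by []. Qed.

Lemma orient_rot a b c : orient a b c = orient b c a.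
Proof. by rewrite /orient; ring. Qed.

Lemma orient_swap a b c : orient a c b = - orient a b c.
Proof. by rewrite /orient; ring. Qed.

Lemma seg_meet_sym a b c d : seg_meet a b c d -> seg_meet c d a b.
Proof. by case=> s [t [hs ht e1 e2]]; exists t, s. Qed.

Lemma seg_meet_revl a b c d : seg_meet a b c d -> seg_meet b a c d.
Proof.
case=> s [t [/andP[s0 s1] ht e1 e2]]; exists (1 - s), t; split => //.
- by apply/andP; split; lra.
- by rewrite -e1; ring.
- by rewrite -e2; ring.
Qed.

Lemma seg_meet_revr a b c d : seg_meet a b c d -> seg_meet a b d c.
Proof. by move=> /seg_meet_sym /seg_meet_revl /seg_meet_sym. Qed.

Lemma convex_quad_seg_meet a b c d :
  0 < orient a b c -> 0 < orient a b d -> 0 < orient a c d -> 0 < orient b c d ->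
  seg_meet a c b d.
Proof.
move=> abc abd acd bcd.
have D_eq : orient a b d + orient b c d = orient a b c + orient a c d.
  by rewrite /orient; ring.
have D_gt0 : 0 < orient a b d + orient b c d by rewrite addr_gt0.
exists (orient a b d / (orient a b d + orient b c d)),
       (orient a b c / (orient a b d + orient b c d)); split.
- by rewrite divr_ge0 ?(ltW abd) ?(ltW D_gt0) //= ler_pdivrMr // mul1r lerDl ltW.
- by rewrite divr_ge0 ?(ltW abc) ?(ltW D_gt0) //= ler_pdivrMr // mul1r D_eq lerDl ltW.
all: move: (lt0r_neq0 D_gt0); rewrite /orient.
all: case: a b c d {abc abd acd bcd D_eq D_gt0} => [a1 a2] [b1 b2] [c1 c2] [d1 d2] /=.
all: by move=> D_neq0; field.
Qed.

Lemma in_triangle_convex_comb a b c j :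
  0 < orient a b c -> 0 < orient j b c -> 0 < orient a j c -> 0 < orient a b j ->
  exists al be ga : R, [/\ 0 < al, 0 < be, 0 < ga, al + be + ga = 1 &
    j = (al * a.1 + be * b.1 + ga * c.1, al * a.2 + be * b.2 + ga * c.2)].
Proof.
move=> abc jbc ajc abj.
exists (orient j b c / orient a b c), (orient a j c / orient a b c),
       (orient a b j / orient a b c); split; rewrite ?divr_gt0 //.
all: move: (lt0r_neq0 abc); rewrite /orient.
all: case: a b c j {abc jbc ajc abj} => [a1 a2] [b1 b2] [c1 c2] [j1 j2] /= abc.
  by field.
by congr (_, _); field.
Qed.

Definition lexpos (u1 u2 : R) : bool := (0 < u1) || ((u1 == 0) && (0 < u2)).

Definition lex_lt a b : bool := lexpos (b.1 - a.1) (b.2 - a.2).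

Lemma lexposD (u1 u2 v1 v2 : R) :
  lexpos u1 u2 -> lexpos v1 v2 -> lexpos (u1 + v1) (u2 + v2).
Proof.
rewrite /lexpos => /orP[u1_gt0|/andP[/eqP-> u2_gt0]] /orP[v1_gt0|/andP[/eqP-> v2_gt0]].
- by rewrite addr_gt0.
- by rewrite addr0 u1_gt0.
- by rewrite add0r v1_gt0.
- by rewrite addr0 eqxx addr_gt0 ?orbT.
Qed.

Lemma lexposZ (k u1 u2 : R) : 0 < k -> lexpos u1 u2 -> lexpos (k * u1) (k * u2).
Proof.
by move=> k_gt0; rewrite /lexpos !pmulr_rgt0 // mulf_eq0 (gt_eqF k_gt0).
Qed.

Lemma lexposN (u1 u2 : R) : lexpos u1 u2 -> ~~ lexpos (- u1) (- u2).
Proof.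
rewrite /lexpos !oppr_gt0 oppr_eq0 => /orP[u1_gt0|/andP[/eqP-> u2_gt0]].
  by rewrite (gt_eqF u1_gt0) ltNge ltW.
by rewrite ltxx eqxx ltNge ltW.
Qed.

(* [k (y - o) = a (x - o) + b (z - o)] for the orientations [k = orient o x z],
   [a = orient o y z], [b = orient o x y]; the right side is lexicographically
   positive, which rules out [k < 0]. *)
Lemma orient_lex_trans o x y z :
  lex_lt o x -> lex_lt o y -> lex_lt o z ->
  0 < orient o x y -> 0 < orient o y z -> orient o x z != 0 -> 0 < orient o x z.
Proof.
move=> ox oy oz oxy oyz oxz_neq0.
rewrite lt_neqAle eq_sym oxz_neq0 /= leNgt; apply/negP => oxz_lt0.
have := lexposD (lexposZ oyz ox) (lexposZ oxy oz).
have -> : orient o y z * (x.1 - o.1) + orient o x y * (z.1 - o.1)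
          = - (- orient o x z * (y.1 - o.1)) by rewrite /orient; ring.
have -> : orient o y z * (x.2 - o.2) + orient o x y * (z.2 - o.2)
          = - (- orient o x z * (y.2 - o.2)) by rewrite /orient; ring.
by apply/negP/lexposN/lexposZ; rewrite // oppr_gt0.
Qed.
End Orientation.

Section ConvexPosition.
Variables (R : realType) (n : nat) (p : 'I_n -> R * R).
Local Open Scope ring_scope.
Hypotheses (p_inj : injective p) (p_convex : convex_position p).
Hypothesis p_no3col : forall i j k : 'I_n, i != j -> j != k -> i != k ->
  ~~ collinear (p i) (p j) (p k).

Lemma no_point_in_triangle (a b c j : 'I_n) : j != a -> j != b -> j != c ->
  0 < orient (p a) (p b) (p c) -> 0 < orient (p j) (p b) (p c) ->
  0 < orient (p a) (p j) (p c) -> 0 < orient (p a) (p b) (p j) -> False.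
Proof.
move=> ja jb jc abc jbc ajc abj.
have [al [be [ga [al_gt0 be_gt0 ga_gt0 sum1 pj]]]] :=
  in_triangle_convex_comb abc jbc ajc abj.
pose lam i := al * (i == a)%:R + be * (i == b)%:R + ga * (i == c)%:R.
have sum_lam F : \sum_i lam i * F i = al * F a + be * F b + ga * F c.
  have pick d : \sum_i (i == d)%:R * F i = F d.
    rewrite (eq_bigr (fun i => if i == d then F i else 0)).
      by rewrite -big_mkcond big_pred1_eq.
    by move=> i _; rewrite mulr_natl mulrb.
  rewrite (eq_bigr (fun i => al * ((i == a)%:R * F i) + be * ((i == b)%:R * F i)
                             + ga * ((i == c)%:R * F i))).
    by rewrite !big_split -!mulr_sumr !pick.
  by move=> i _; rewrite /lam; ring.
apply: (@p_convex j); exists lam; split.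
- by move=> i; rewrite /lam !addr_ge0 // mulr_ge0 // ltW.
- by rewrite /lam (negbTE ja) (negbTE jb) (negbTE jc) !mulr0 !addr0.
- have /= := sum_lam (fun=> 1); rewrite !mulr1 sum1 => <-.
  by apply: eq_bigr => i _; rewrite mulr1.
- by rewrite !sum_lam pj.
Qed.

Lemma exists_lex_min : (0 < n)%N ->
  exists o, forall j, j != o -> lex_lt (p o) (p j).
Proof.
move=> n_gt0; pose i0 := Ordinal n_gt0.
have [o1 _ o1_min] := @arg_minP _ _ _ i0 predT (fun i => (p i).1) isT.
have [o /eqP o_o1 o_min] :=
  @arg_minP _ _ _ o1 (fun i => (p i).1 == (p o1).1) (fun i => (p i).2) (eqxx _).
exists o => j j_o; rewrite /lex_lt /lexpos subr_gt0 subr_eq0 o_o1.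
have [j_o1|] := eqVneq (p j).1 (p o1).1; last first.
  by rewrite lt_neqAle eq_sym => ->; rewrite o1_min.
rewrite j_o1 ltxx /= subr_gt0 lt_neqAle o_min ?j_o1 // andbT; apply/eqP => e.
move: j_o; rewrite (@p_inj j o) ?eqxx //.
by rewrite [p j]surjective_pairing [p o]surjective_pairing j_o1 o_o1 e.
Qed.

Section AngularOrder.
Variable o : 'I_n.
Hypothesis o_lex_min : forall j, j != o -> lex_lt (p o) (p j).

Definition angle_lt x y : bool :=
  (y != o) && ((x == o) || (0 < orient (p o) (p x) (p y))).

Lemma angle_lt_irr x : ~~ angle_lt x x.
Proof.
rewrite /angle_lt negb_and negbK orbC; case: eqVneq => //= _.
by rewrite /orient mulrC subrr ltxx.
Qed.

Lemma angle_lt_total x y : x != y -> angle_lt x y || angle_lt y x.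
Proof.
rewrite /angle_lt; have [-> oy|xo xy] := eqVneq x o; first by rewrite eq_sym oy.
have [-> //|yo /=] := eqVneq y o.
have oxy : orient (p o) (p x) (p y) != 0.
  by rewrite -collinearE; apply: p_no3col; rewrite // eq_sym.
by rewrite (orient_swap (p o) (p x)) oppr_gt0 orbC -neq_lt.
Qed.

Lemma angle_lt_trans x y z : angle_lt x y -> angle_lt y z -> angle_lt x z.
Proof.
rewrite /angle_lt => /andP[yo] /[swap] /andP[zo]; rewrite zo (negbTE yo) /=.
have [//|xo /= oyz oxy] := eqVneq x o.
have xz : x != z.
  apply/eqP => xz; move: oyz; rewrite -xz (orient_swap (p o) (p x)) oppr_gt0.
  by move/(lt_trans oxy); rewrite ltxx.
apply: orient_lex_trans oxy oyz _; rewrite ?o_lex_min //.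
by rewrite -collinearE; apply: p_no3col; rewrite // eq_sym.
Qed.

Definition angle_rank x := #|[set y | angle_lt y x]|.

Local Close Scope ring_scope.

Lemma angle_rank_lt x y : (angle_rank x < angle_rank y) = angle_lt x y.
Proof.
have mono u v : angle_lt u v -> angle_rank u < angle_rank v.
  move=> uv; apply: proper_card; apply/properP; split.
    by apply/subsetP => w; rewrite !inE => /angle_lt_trans; apply.
  by exists u; rewrite !inE // angle_lt_irr.
apply/idP/idP; last exact: mono.
have [<-|xy] := eqVneq x y; first by rewrite ltnn.
case/orP: (angle_lt_total xy) => // /mono yx xy'.
by have := ltn_trans xy' yx; rewrite ltnn.
Qed.

Lemma angle_rank_inj : injective angle_rank.
Proof.
move=> x y rxy; apply/eqP; apply: contraT => xy.
by case/orP: (angle_lt_total xy); rewrite -!angle_rank_lt rxy ltnn.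
Qed.

Lemma angle_rank_bound x : angle_rank x < n.
Proof.
rewrite -[n]card_ord; apply: proper_card; apply/properP.
by split; [exact: subset_predT | exists x; rewrite // inE angle_lt_irr].
Qed.

Lemma angle_rank_ccw x y z :
  angle_rank x < angle_rank y -> angle_rank y < angle_rank z ->
  (0 < orient (p x) (p y) (p z))%R.
Proof.
rewrite !angle_rank_lt => xy yz; have xz := angle_lt_trans xy yz.
have neq u v : angle_lt u v -> u != v.
  by move=> uv; apply: contraTneq uv => ->; exact: angle_lt_irr.
have x_y := neq _ _ xy; have y_z := neq _ _ yz; have x_z := neq _ _ xz.
move: xy yz xz; rewrite /angle_lt => /andP[yo oxy] /andP[_ oyz] /andP[_ oxz].
rewrite (negbTE yo) /= in oyz.
have [-> //|xo] := eqVneq x o; rewrite (negbTE xo) /= in oxy oxz.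
have : orient (p x) (p y) (p z) != 0%R.
  by rewrite -collinearE; apply: p_no3col.
rewrite neq_lt orbC => /orP[//|xyz_lt0]; exfalso.
apply: (no_point_in_triangle (a := o) (b := x) (c := z) (j := y)) => //.
- by rewrite eq_sym.
- by rewrite orient_rot orient_swap oppr_gt0.
Qed.
End AngularOrder.

Local Close Scope ring_scope.

Record ccw_labelling (r : 'I_n -> nat) (pr : 'I_n -> 'I_n) : Prop := CcwLabelling {
  ccw_rank_inj : injective r;
  ccw_rank_lt x : r x < n;
  ccw_rank_pred z : r (pr z) = (r z + n.-1) %% n;
  ccw_orient x y z : r x < r y -> r y < r z -> (0 < orient (p x) (p y) (p z))%R }.

Lemma exists_ccw_labelling : 0 < n -> exists r pr, ccw_labelling r pr.
Proof.
move=> n_gt0; have [o o_min] := exists_lex_min n_gt0.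
pose rk x : 'I_n := Ordinal (angle_rank_bound o x).
have rk_inj : injective rk by move=> x y /(congr1 val) /(angle_rank_inj o_min).
have /fin_all_exists[pr prE] z :
    exists w, angle_rank o w = (angle_rank o z + n.-1) %% n.
  have /codomP[w /(congr1 val) /= rk_w] :=
    injF_onto rk_inj (Ordinal (ltn_pmod (angle_rank o z + n.-1) n_gt0)).
  by exists w.
exists (angle_rank o), pr; split => //.
- exact: angle_rank_inj.
- exact: angle_rank_bound.
- exact: angle_rank_ccw.
Qed.
End ConvexPosition.

Lemma connect_cut (T : finType) (e : rel T) (P : pred T) x y :
  connect e x y -> P x -> ~~ P y -> exists s t, [/\ e s t, P s & ~~ P t].
Proof.
case/connectP => q + ->{y}; elim: q x => [|z q IH] x /=; first by move=> _ ->.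
case/andP=> exz ezq Px; case: (boolP (P z)) => [Pz|nPz _]; first exact: IH.
by exists x, z.
Qed.

Section CutEdges.
Variables (n : nat) (T : finType) (f : 'I_n -> T).
Variables (S : {set 'I_n}) (E : {set 'I_n * 'I_n}).
Hypothesis E_sub : forall e, e \in E -> (e.1 \in S) && (e.2 \in S).
Hypothesis E_conn : forall x y, x \in S -> y \in S -> connect (edge_rel E) x y.

Let cut := [set e in E | f e.1 != f e.2].
Let cut_out (L : {set T}) := [set e in cut | ~~ ((f e.1 \in L) && (f e.2 \in L))].

Lemma card_imset_le_cut_out (L : {set T}) :
  L \subset f @: S -> L != set0 -> #|f @: S :\: L| <= #|cut_out L|.
Proof.
move k_eq: #|f @: S :\: L| => k; elim: k L k_eq => [|k IH] L k_eq sL L0 //.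
have /set0Pn[l] : f @: S :\: L != set0 by rewrite -card_gt0 k_eq.
rewrite inE => /andP[fyL /imsetP[y yS l_fy]]; subst l.
have /set0Pn[l0 l0L] := L0; have /imsetP[x xS l0_fx] := subsetP sL _ l0L; subst l0.
have [s [t [st fsL ftL]]] :=
  connect_cut (P := fun z => f z \in L) (E_conn xS yS) l0L fyL.
have [e eE fe] : exists2 e, e \in E & (f e.1 \in L) != (f e.2 \in L).
  by case/orP: st => st; [exists (s, t) | exists (t, s)]; rewrite //= fsL (negbTE ftL).
have /andP[e1S e2S] := E_sub eE.
have [v [vL vS fe_v]] : exists v,
    [/\ v \notin L, v \in f @: S & (f e.1 \in v |: L) && (f e.2 \in v |: L)].
  case fe1: (f e.1 \in L) fe => /= fe2.
  - by exists (f e.2); rewrite !in_setU1 fe1 eqxx orbT fe2 imset_f.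
  - exists (f e.1); rewrite !in_setU1 fe1 eqxx -(negbK (f e.2 \in L)) fe2 orbT.
    by rewrite imset_f.
have e_out : e \in cut_out L.
  rewrite !inE eE /=; apply/andP; split; first by apply: contraNneq fe => ->.
  by apply: contra fe => /andP[-> ->].
have e_in : e \notin cut_out (v |: L) by rewrite inE fe_v andbF.
have k_eq' : #|f @: S :\: (v |: L)| = k.
  by move: k_eq; rewrite (cardsD1 v) !inE vL vS setDDl setUC => -[].
have sub : cut_out (v |: L) \proper cut_out L.
  apply/properP; split; last by exists e.
  apply/subsetP => d; rewrite inE => /andP[dcut dout]; rewrite inE dcut /=.
  by apply: contra dout => /andP[d1 d2]; rewrite !in_setU1 d1 d2 !orbT.
apply: leq_ltn_trans (IH _ k_eq' _ _) (proper_card sub).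
  by rewrite subUset sub1set vS sL.
by apply/set0Pn; exists v; rewrite setU11.
Qed.

Lemma card_imset_le_cut : #|f @: S| <= #|cut|.+1.
Proof.
have [->|[x xS]] := set_0Vmem S; first by rewrite imset0 cards0.
have fxS : f x \in f @: S := imset_f f xS.
rewrite (cardsD1 (f x)) fxS add1n ltnS.
apply: leq_trans (card_imset_le_cut_out _ _) _.
- by rewrite sub1set.
- by apply/set0Pn; exists (f x); rewrite set11.
- by apply/subset_leq_card/subsetP => e; rewrite inE => /andP[].
Qed.

End CutEdges.

Lemma modn_lt_double m d : m < d.*2 -> m %% d = if m < d then m else m - d.
Proof.
move=> m_lt; case: ltnP => m_d; first by rewrite modn_small.
by rewrite -{1}(subnK m_d) modnDr modn_small //; lia.
Qed.

Lemma ltn_addmod_cases d a b c s : a < d -> b < d -> c < d -> s < d ->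
  (a + s) %% d < (b + s) %% d -> (b + s) %% d < (c + s) %% d ->
  [\/ a < b < c, b < c < a | c < a < b].
Proof.
move=> a_lt b_lt c_lt s_lt; rewrite !modn_lt_double; try lia.
case: (ltnP (a + s) d); case: (ltnP (b + s) d); case: (ltnP (c + s) d) => *.
all: first [by constructor 1; lia | by constructor 2; lia | by constructor 3; lia | lia].
Qed.

Section Labelling.
Variables (R : realType) (n : nat) (p : 'I_n -> R * R).
Variables (r : 'I_n -> nat) (pr : 'I_n -> 'I_n).
Hypothesis hr : ccw_labelling p r pr.

Lemma ccw_seg_meet x y s t : r x < r s < r y -> (r t < r x) || (r y < r t) ->
  seg_meet (p x) (p y) (p s) (p t).
Proof.
have ccw := ccw_orient hr; case/andP=> xs sy /orP[tx|yt].
- by apply/seg_meet_revr/seg_meet_sym/convex_quad_seg_meet; apply: ccw; lia.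
- by apply: convex_quad_seg_meet; apply: ccw; lia.
Qed.

Lemma ccw_rank_pred_pos z : 0 < r z -> r (pr z) = (r z).-1.
Proof.
move=> rz_gt0; have rz_lt := ccw_rank_lt hr z.
by rewrite (ccw_rank_pred hr) modn_lt_double; case: ltnP; lia.
Qed.

Lemma ccw_pred_neq z : 1 < n -> pr z != z.
Proof.
move=> n_gt1; apply/eqP => /(congr1 r); have rz_lt := ccw_rank_lt hr z.
by rewrite (ccw_rank_pred hr) modn_lt_double; case: ltnP; lia.
Qed.

Lemma ccw_labelling_shift s : ccw_labelling p (fun x => (r x + s) %% n) pr.
Proof.
have [r_inj r_lt r_pred ccw] := hr.
have n_gt0 (x : 'I_n) : 0 < n by have := r_lt x; lia.
split.
- move=> x y /eqP; rewrite eqn_modDr !modn_small // => /eqP; exact: r_inj.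
- by move=> x; exact: ltn_pmod _ (n_gt0 x).
- by move=> z; rewrite r_pred !modnDml addnAC.
- move=> x y z; rewrite -(modnDmr (r x)) -(modnDmr (r y)) -(modnDmr (r z)) => xy yz.
  have s_lt : s %% n < n := ltn_pmod _ (n_gt0 x).
  have [] := ltn_addmod_cases (r_lt x) (r_lt y) (r_lt z) s_lt xy yz => /andP[lt1 lt2].
  + exact: ccw.
  + by rewrite orient_rot; apply: ccw.
  + by rewrite -orient_rot; apply: ccw.
Qed.

Lemma ccw_connect_seg_meet (S : {set 'I_n}) (E : {set 'I_n * 'I_n}) x y u w :
  (forall e, e \in E -> (e.1 \in S) && (e.2 \in S)) -> x \notin S -> y \notin S ->
  connect (edge_rel E) u w -> r x < r u < r y -> (r w < r x) || (r y < r w) ->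
  exists2 f, f \in E & seg_meet (p x) (p y) (p f.1) (p f.2).
Proof.
move=> E_sub xS yS uw u_in w_out.
have w_out' : ~~ (r x < r w < r y) by rewrite negb_and -!leqNgt; lia.
have [s [t [st s_in t_out]]] :=
  connect_cut (P := fun t => r x < r t < r y) uw u_in w_out'.
have [sS tS] : s \in S /\ t \in S by case/orP: st => /E_sub /andP[] /= -> ->.
have rt_x : r t != r x by apply: contraNneq xS => /(ccw_rank_inj hr) <-.
have rt_y : r t != r y by apply: contraNneq yS => /(ccw_rank_inj hr) <-.
have st_meet : seg_meet (p x) (p y) (p s) (p t).
  apply: ccw_seg_meet => //.
  by move: t_out rt_x rt_y; rewrite /= negb_and -!leqNgt; lia.
case/orP: st => st; first by exists (s, t).
by exists (t, s); last exact: seg_meet_revr.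
Qed.
End Labelling.

Lemma card_le_cr (R : realType) n (p : 'I_n -> R * R) (A E1 E2 : {set 'I_n * 'I_n}) :
  A \subset E1 ->
  (forall e, e \in A ->
     exists2 f, f \in E2 & seg_meet (p e.1) (p e.2) (p f.1) (p f.2)) ->
  #|A| <= cr p E1 E2.
Proof.
move=> A_sub A_cross.
have /fin_all_exists[g gP] e : exists f,
    e \in A -> f \in E2 /\ seg_meet (p e.1) (p e.2) (p f.1) (p f.2).
  by case: (boolP (e \in A)) => [/A_cross[f f_in f_meet]|_]; [exists f | exists e].
rewrite -(card_imset _ (f := fun e => (e, g e))); last by move=> e1 e2 [].
apply/subset_leq_card/subsetP => _ /imsetP[e eA ->].
have [gE g_meet] := gP e eA.
by rewrite inE /= (subsetP A_sub _ eA) gE; apply/asboolP.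
Qed.

Section Runs.
Variables (R : realType) (n : nat) (p : 'I_n -> R * R).
Variables (r : 'I_n -> nat) (pr : 'I_n -> 'I_n) (c : 'I_n -> bool).

Definition run_starts : {set 'I_n} := [set z | c z && ~~ c (pr z)].

(* When a run starts at label 0, two red points lie in the same red run iff
   they have the same [runs_upto]. *)
Definition runs_upto y : {set 'I_n} := [set z in run_starts | r z <= r y].

Hypothesis hr : ccw_labelling p r pr.

Lemma card_run_starts_le : #|run_starts| <= #|runs_upto @: [set i | c i]|.
Proof.
have upto_le z1 z2 : z1 \in run_starts -> runs_upto z1 = runs_upto z2 -> r z1 <= r z2.
  move=> z1S e; have : z1 \in runs_upto z1 by rewrite inE z1S leqnn.
  by rewrite e inE => /andP[].
have inj : {in run_starts &, injective runs_upto}.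
  move=> z1 z2 z1S z2S e; apply: (ccw_rank_inj hr); apply/eqP.
  by rewrite eqn_leq upto_le //= upto_le.
rewrite -(card_in_imset inj); apply/subset_leq_card/imsetS/subsetP => z.
by rewrite !inE => /andP[].
Qed.

Lemma blue_between x y : c x -> r x < r y -> runs_upto x != runs_upto y ->
  exists2 u, ~~ c u & r x < r u < r y.
Proof.
move=> cx xy upto_xy.
have sub_xy : runs_upto x \subset runs_upto y.
  by apply/subsetP => z; rewrite !inE => /andP[-> /leq_trans]; apply; apply: ltnW.
have /subsetPn[z] : ~~ (runs_upto y \subset runs_upto x).
  by apply: contra upto_xy => sub_yx; rewrite eq_sym eqEsubset sub_yx.
rewrite !inE => /andP[/andP[cz ncpz] zy]; rewrite cz ncpz /= -ltnNge => xz.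
exists (pr z) => //; rewrite (ccw_rank_pred_pos hr) ?(leq_ltn_trans _ xz) //.
have : r (pr z) != r x by apply: contraNneq ncpz => /(ccw_rank_inj hr) ->.
by rewrite (ccw_rank_pred_pos hr) ?(leq_ltn_trans _ xz) //; lia.
Qed.

Section FromRunStart.
Variables (z0 : 'I_n) (ER EB : {set 'I_n * 'I_n}).
Hypotheses (z0_start : z0 \in run_starts) (r_z0 : r z0 = 0).
Hypothesis ER_tree : is_spanning_tree [set i | c i] ER.
Hypothesis EB_tree : is_spanning_tree [set i | ~~ c i] EB.

Lemma red_chord_crosses x y :
  c x -> c y -> r x < r y -> runs_upto x != runs_upto y ->
  exists2 f, f \in EB & seg_meet (p x) (p y) (p f.1) (p f.2).
Proof.
move=> cx cy xy upto_xy; have [u ncu xuy] := blue_between cx xy upto_xy.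
have [EB_sub EB_conn _] := EB_tree.
move: z0_start; rewrite inE => /andP[cz0 ncpz0].
have ry_lt := ccw_rank_lt hr y.
have rw : r (pr z0) = n.-1 by rewrite (ccw_rank_pred hr) r_z0 modn_small //; lia.
have : r y != r (pr z0) by apply: contraTneq cy => /(ccw_rank_inj hr) ->.
rewrite rw => ry_w.
apply: (ccw_connect_seg_meet hr (S := [set i | ~~ c i]) (u := u) (w := pr z0)).
- by move=> e /EB_sub[-> -> _].
- by rewrite inE cx.
- by rewrite inE cy.
- by apply: EB_conn; rewrite inE.
- exact: xuy.
- by apply/orP; right; lia.
Qed.

Lemma card_run_starts_le_cr_from : #|run_starts| <= (cr p ER EB).+1.
Proof.
have [ER_sub ER_conn _] := ER_tree.
apply: (leq_trans card_run_starts_le).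
apply: leq_trans (card_imset_le_cut runs_upto _ ER_conn) _.
  by move=> e /ER_sub[-> -> _].
rewrite ltnS; apply: card_le_cr => [|e].
  by apply/subsetP => e; rewrite inE => /andP[].
rewrite inE => /andP[/ER_sub[e1 e2 _] upto_e]; rewrite !inE in e1 e2.
have [e12|e21|/(ccw_rank_inj hr) e_eq] := ltngtP (r e.1) (r e.2).
- exact: red_chord_crosses.
- have [f fE f_meet] := red_chord_crosses e2 e1 e21 ltac:(by rewrite eq_sym).
  by exists f => //; apply: seg_meet_revl.
- by rewrite e_eq eqxx in upto_e.
Qed.
End FromRunStart.
End Runs.

Lemma card_run_starts_le_cr (R : realType) n (p : 'I_n -> R * R)
    r pr (c : 'I_n -> bool) (ER EB : {set 'I_n * 'I_n}) :
  ccw_labelling p r pr ->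
  is_spanning_tree [set i | c i] ER -> is_spanning_tree [set i | ~~ c i] EB ->
  #|run_starts pr c| <= (cr p ER EB).+1.
Proof.
move=> hr ER_tree EB_tree; have [->|[z0 z0_start]] := set_0Vmem (run_starts pr c).
  by rewrite cards0.
have rz0_lt := ccw_rank_lt hr z0.
apply: (card_run_starts_le_cr_from (ccw_labelling_shift hr (n - r z0)) z0_start) => //.
by rewrite subnKC ?modnn // ltnW.
Qed.

Lemma card_ffun_fix2 n (a b : 'I_n) (u v : bool) : a != b ->
  #|[set c : {ffun 'I_n -> bool} | (c a == u) && (c b == v)]| * 4 = 2 ^ n.
Proof.
move=> ab.
pose F (i : 'I_n) : pred bool :=
  if i == a then pred1 u else if i == b then pred1 v else predT.
have -> : [set c : {ffun 'I_n -> bool} | (c a == u) && (c b == v)]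
          = [set c in family F].
  apply/setP => c; rewrite !inE; apply/andP/familyP => [[ca cb] i|Fc].
    by rewrite /F; case: eqP => [->|_]; [|case: eqP => [->|]].
  by have := Fc a; have := Fc b; rewrite /F eqxx eq_sym (negbTE ab) eqxx.
rewrite cardsE card_family foldrE big_map big_enum /=.
have e2 : 2 ^ n = \prod_(i in 'I_n) 2 by rewrite prod_nat_const card_ord.
have ba : b != a by rewrite eq_sym.
rewrite e2 (bigD1 a) //= (bigD1 b) //= [in RHS](bigD1 a) //= [in RHS](bigD1 b) //=.
rewrite /F eqxx (negbTE ba) eqxx !card1 !mul1n mulnC.
rewrite mulnA; congr (_ * _).
by apply: eq_bigr => i /andP[/negbTE-> /negbTE->]; exact: card_bool.
Qed.

Lemma sum_card_run_starts n (pr : 'I_n -> 'I_n) : (forall z, pr z != z) ->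
  \sum_(c : {ffun 'I_n -> bool}) #|run_starts pr c| * 4 = n * 2 ^ n.
Proof.
move=> pr_neq; rewrite -big_distrl /=.
under eq_bigr do rewrite -sum1_card big_mkcond /=.
rewrite exchange_big big_distrl /= (eq_bigr (fun=> 2 ^ n)).
  by rewrite sum_nat_const card_ord.
move=> z _.
rewrite -(card_ffun_fix2 true false (_ : z != pr z)) 1?eq_sym //.
rewrite -sum1_card [in RHS]big_mkcond /=; congr (_ * _); apply: eq_bigr => c _.
by rewrite !inE eqb_id eqbF_neg.
Qed.

Local Open Scope ring_scope.

Theorem lemma4 (R : realType) (n : nat) (p : 'I_n -> R * R)
    (T : {set 'I_n} -> {set 'I_n * 'I_n}) :
  injective p -> generic p -> convex_position p ->
  (forall S : {set 'I_n}, is_mst p S (T S)) ->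
  n%:R / 4 - 1 <=
    (\sum_(c : {ffun 'I_n -> bool})
        (cr p (T [set i | c i]) (T [set i | ~~ c i]))%:R) / 2 ^+ n :> R.
Proof.
move=> p_inj [p_no3col _] p_convex T_mst.
have [n_lt2|n_ge2] := ltnP n 2.
  apply: (@le_trans _ _ 0); last by rewrite divr_ge0 ?sumr_ge0 ?exprn_ge0.
  by rewrite subr_le0 ler_pdivrMr // mul1r ler_nat; lia.
have [r [pr hr]] := exists_ccw_labelling p_inj p_convex p_no3col (ltnW n_ge2).
set crs := \sum_(c : {ffun 'I_n -> bool}) cr p (T [set i | c i]) (T [set i | ~~ c i]).
have runs_le : (\sum_(c : {ffun 'I_n -> bool}) #|run_starts pr c| <= crs + 2 ^ n)%N.
  have le_c (c : {ffun 'I_n -> bool}) :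
      (#|run_starts pr c| <= (cr p (T [set i | c i]) (T [set i | ~~ c i])).+1)%N.
    exact: card_run_starts_le_cr hr (T_mst _).1 (T_mst _).1.
  apply: leq_trans (leq_sum _ (fun c _ => le_c c)) _.
  under eq_bigr do rewrite -addn1.
  by rewrite big_split /= sum_nat_const card_ffun card_bool card_ord muln1.
have := sum_card_run_starts (fun z => ccw_pred_neq hr z n_ge2).
rewrite -big_distrl /= => sum_runs.
have : (n * 2 ^ n <= (crs + 2 ^ n) * 4)%N by rewrite -sum_runs leq_mul2r runs_le orbT.
rewrite -(ler_nat R) -natr_sum -/crs ler_pdivlMr ?exprn_gt0 // !natrM natrD natrX.
set N := n%:R; set P := 2%:R ^+ n; rewrite mulrBl mul1r mulrAC.
set NP := N * P; lra.
Qed.
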